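(* Let $c=\log(1/\epsilon)$, $C=[0,c]^m$, $C_{c/2}=[-c/2,3c/2]^m$, and define $$g'(x)=\begin{cases}g\big(\Pi_C(x)\big)\Big(1-\frac{2d_\infty(x,C)}{c}\Big),&x\in C_{c/2},\\0,&x\notin C_{c/2},\end{cases}$$ where $\Pi_C(x)$ is the Euclidean projection of $x$ onto $C$ and $d_\infty(x,C)=\inf_{y\in C}\|x-y\|_\infty$. Then $g'$ is bounded, Lipschitz, has compact support, and $g'(x)=g(x)$ for all $x\in C$. Furthermore, if $V'$ is the viscosity solution of $\partial_tV'+H(\nabla_xV')=0$ on $\mathbb R^m\times[0,1)$ with $V'(\cdot,1)=g'$, then $V'(x,t)=0$ for all $t\in[0,1]$ and all $x\notin[-3c/2,3c/2]^m$.
   Context: $\mathcal X$ finite, $\Delta_{\mathcal X}$ the distributions on $\mathcal X$, $\Delta_K$ the simplex on $[K]$, $D$ the KL divergence; $m\ge2$ bandits $\nu^1,\dots,\nu^m$, $\nu^i=(\nu^i_a)_{a\in[K]}$, with $\nu^i_a(x)\ge\epsilon$ for all $i,a,x$, $\epsilon\in(0,1)$. $H(p)=\min_{Q\in(\Delta_{\mathcal X})^K}\max_{w\in\Delta_K}\sum_{i=1}^m\sum_aw(a)D(Q_a\|\nu^i_a)p_i$; $g(x)=\max_{j\in[m]}\min_{i\ne j}x_i$. Viscosity solutions of such terminal-value problems are the values of the zero-sum differential game with dynamics $\dot x_i=\sum_aw(a)D(Q_a\|\nu^i_a)$, maximizer control $w\in\Delta_K$, minimizer control $Q\in(\Delta_{\mathcal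 X})^K$ and payoff equal to the terminal function at the final state. *)

From HB Require Import structures.
From mathcomp Require Import all_boot all_order all_algebra.
From mathcomp Require Import all_classical all_reals all_analysis.
Unset Printing Implicit Defensive.
Import Order.TTheory GRing.Theory Num.Theory.
Import numFieldNormedType.Exports.
Local Open Scope classical_set_scope.
Local Open Scope ring_scope.

Section Defs.
Context {R : realType}.

Definition is_dist (X : finType) (q : X -> R) : Prop :=
  (forall x, 0 <= q x) /\ \sum_(x : X) q x = 1.

Definition simplexK (K : nat) : set ('I_K -> R) :=
  [set w | is_dist _ w].

Definition distK (X : finType) (K : nat) : set ('I_K -> X -> R) :=
  [set Q | forall a, is_dist X (Q a)].

(* KL divergence D(q || p) = sum_x q(x) ln(q(x)/p(x)) (p > 0 here; the
   term is 0 when q(x) = 0, matching the convention 0 ln 0 = 0) *)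
Definition KL (X : finType) (q p : X -> R) : R :=
  \sum_(x : X) q x * ln (q x / p x).

Definition Ham (X : finType) (K m : nat) (nu : 'I_m -> 'I_K -> X -> R)
  (p : 'rV[R]_m) : R :=
  inf [set sup [set \sum_(i < m) \sum_(a < K) w a * KL X (Q a) (nu i a) * p ord0 i
                | w in simplexK K]
      | Q in distK X K].

Definition gfun (m : nat) (x : 'rV[R]_m) : R :=
  sup [set inf [set x ord0 i | i in [set i : 'I_m | i != j]] | j in [set: 'I_m]].

Definition cubeC (m : nat) (c : R) : set 'rV[R]_m :=
  [set y | forall i, 0 <= y ord0 i <= c].
Definition in_cube_half (m : nat) (c : R) (x : 'rV[R]_m) : bool :=
  [forall i, (- (c / 2) <= x ord0 i <= 3 * c / 2)].

(* Euclidean projection onto the box [0,c]^m (= coordinatewise clamping) *)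
Definition projC (m : nat) (c : R) (x : 'rV[R]_m) : 'rV[R]_m :=
  \row_i Num.min (Num.max (x ord0 i) 0) c.

(* d_oo(x, C) = inf_{y in C} ||x - y||_oo  (the norm on 'rV is the sup norm) *)
Definition dinf (m : nat) (c : R) (x : 'rV[R]_m) : R :=
  inf [set `|x - y| | y in cubeC m c].

Definition gprime (m : nat) (c : R) (x : 'rV[R]_m) : R :=
  if in_cube_half m c x then gfun m (projC m c x) * (1 - 2 * dinf m c x / c) else 0.

(* Viscosity solutions of  d_t V + H(grad_x V) = 0  on R^m x (0,1) with
   V(.,1) = G, for V continuous on R^m x [0,1].  Test functions are
   differentiable functions phi : 'rV_m * R -> R. *)
Definition grad_x (m : nat) (phi : 'rV[R]_m * R -> R) (z : 'rV[R]_m * R)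
  : 'rV[R]_m := \row_i ('d phi z) (delta_mx ord0 i, 0).
Definition d_t (m : nat) (phi : 'rV[R]_m * R -> R) (z : 'rV[R]_m * R) : R :=
  ('d phi z) (0, 1).

Definition viscosity_solution (m : nat) (H : 'rV[R]_m -> R)
  (G : 'rV[R]_m -> R) (V : 'rV[R]_m -> R -> R) : Prop :=
  {within [set z : 'rV[R]_m * R | 0 <= z.2 <= 1],
     continuous (fun z => V z.1 z.2)} /\
  (forall x, V x 1 = G x) /\
  (forall (phi : 'rV[R]_m * R -> R) (z0 : 'rV[R]_m * R),
     (forall z, differentiable phi z) -> 0 < z0.2 < 1 ->
     (\forall z \near z0, V z.1 z.2 - phi z <= V z0.1 z0.2 - phi z0) ->
     d_t m phi z0 + H (grad_x m phi z0) >= 0) /\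
  (forall (phi : 'rV[R]_m * R -> R) (z0 : 'rV[R]_m * R),
     (forall z, differentiable phi z) -> 0 < z0.2 < 1 ->
     (\forall z \near z0, V z.1 z.2 - phi z >= V z0.1 z0.2 - phi z0) ->
     d_t m phi z0 + H (grad_x m phi z0) <= 0).

End Defs.

From HB Require Import structures.
From mathcomp Require Import all_boot all_order all_algebra.
From mathcomp Require Import all_classical all_reals all_analysis.
From mathcomp Require Import ring lra.
Import Order.TTheory GRing.Theory Num.Theory.
Import numFieldNormedType.Exports.
Local Open Scope classical_set_scope.
Local Open Scope ring_scope.

(* The properties of g' are elementary: clamping onto C is 1-Lipschitz for the
   sup norm, d_oo(x, C) = |x - Pi_C x| is 1-Lipschitz, g is 1-Lipschitz with
   values in [0, c] on C, and the cut-off factor vanishes outside C_{c/2}.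

   The vanishing of V' is finite speed of propagation.  Since
   0 <= D(Q || nu) <= c, we have H(p) <= c * sum_i p_i^+ and
   -H(-p) <= c * sum_i p_i^+, so V' and -V' are both subsolutions of equations
   whose Hamiltonian is bounded this way.  For such a subsolution U,
   U(x0, t0) <= 0 as soon as U(., 1) <= 0 on a slab
   x0_k - rho < y_k < x0_k + c + rho: otherwise U - psi has a positive maximum
   on a compact box around (x0, t0), where
     psi(x, t) = eta (1 - t) + lam e^{mu (t0 - t)}
               + lam sum_i (e^{mu (x0_i - x_i)} + e^{mu (x_i - x0_i - c (t - t0))})
   is a strict classical supersolution.  For mu large the barriers keep the
   maximiser inside the box and away from t = 1 (where U <= 0 <= psi), so it is
   a local maximum in the open strip, contradicting the subsolution inequality.
   If x lies outside [-3c/2, 3c/2]^m, g' vanishes on such a slab around x. *)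

Section RowNorm.
Context {R : realType} {m : nat}.
Implicit Types x y : 'rV[R]_m.

Lemma rV_norm_coord x i : `|x ord0 i| <= `|x|.
Proof.
have -> : `|x| = \big[Num.max/0]_ij `|x ij.1 ij.2| by exact: mx_normrE.
exact: (le_bigmax _ _ (ord0, i)).
Qed.

Lemma rV_norm_le x b : 0 <= b -> (forall i, `|x ord0 i| <= b) -> `|x| <= b.
Proof.
move=> b0 xb.
have -> : `|x| = \big[Num.max/0]_ij `|x ij.1 ij.2| by exact: mx_normrE.
apply: bigmax_le => // -[i j] _ /=.
by rewrite (ord1 i).
Qed.

Lemma rV_dist_coord x y i : `|x ord0 i - y ord0 i| <= `|x - y|.
Proof. by have := rV_norm_coord (x - y) i; rewrite !mxE. Qed.

End RowNorm.

Section Clamp.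
Context {R : realFieldType} (c : R).
Hypothesis c_ge0 : 0 <= c.

(* [lra] does not use section hypotheses, hence the [have := c_ge0] below. *)

Definition clamp (y : R) : R := Num.min (Num.max y 0) c.

Variant clamp_spec (y : R) : R -> Type :=
| ClampLo of y <= 0 : clamp_spec y 0
| ClampHi of c <= y : clamp_spec y c
| ClampIn of 0 <= y & y <= c : clamp_spec y y.

Lemma clampP y : clamp_spec y (clamp y).
Proof.
rewrite /clamp; case: (leP y 0) => y0.
  by rewrite (min_idPl c_ge0); constructor.
case: (leP y c) => yc; first exact: ClampIn (ltW y0) yc.
exact: ClampHi (ltW yc).
Qed.

Lemma clamp_itv y : 0 <= clamp y <= c.
Proof. by case: clampP => *; apply/andP; split. Qed.

Lemma clamp_id y : 0 <= y <= c -> clamp y = y.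
Proof. by case: clampP => // *; apply/eqP; rewrite eq_le; apply/andP; split; lra. Qed.

Lemma clamp_lipschitz y z : `|clamp y - clamp z| <= `|y - z|.
Proof.
have := c_ge0; have := ler_norm (y - z); have : z - y <= `|y - z| by rewrite distrC ler_norm.
by case: clampP => *; case: clampP => *; rewrite ler_norml; apply/andP; split; lra.
Qed.

Lemma dist_clamp_le y b : 0 <= b <= c -> `|y - clamp y| <= `|y - b|.
Proof.
have := c_ge0; have := ler_norm (y - b); have : b - y <= `|y - b| by rewrite distrC ler_norm.
by case: clampP => *; rewrite ler_norml; apply/andP; split; lra.
Qed.

Lemma dist_clamp_le_half y : - (c / 2) <= y <= 3 * c / 2 -> `|y - clamp y| <= c / 2.
Proof. by have := c_ge0; case: clampP => *; rewrite ler_norml; apply/andP; split; lra. Qed.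

Lemma dist_clamp_gt_half y : ~~ (- (c / 2) <= y <= 3 * c / 2) -> c / 2 < `|y - clamp y|.
Proof.
rewrite negb_and -!ltNge => hy; have := c_ge0; have := ler_norm (y - clamp y).
have : clamp y - y <= `|y - clamp y| by rewrite distrC ler_norm.
by case: clampP => *; case/orP: hy; lra.
Qed.

End Clamp.

Section MaxOfMins.
Context {R : realType} {m : nat}.
Hypothesis m_ge2 : (2 <= m)%N.
Implicit Types x y : 'rV[R]_m.

Definition min_except x (j : 'I_m) : R := inf [set x ord0 i | i in [set i : 'I_m | i != j]].

Lemma gfunE x : gfun m x = sup [set min_except x j | j in [set: 'I_m]].
Proof. by []. Qed.

Lemma exists_neq_ord (j : 'I_m) : exists i : 'I_m, i != j.
Proof.
have [->|] := eqVneq j (Ordinal (ltnW m_ge2)); first by exists (Ordinal m_ge2).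
by exists (Ordinal (ltnW m_ge2)); rewrite eq_sym.
Qed.

Lemma min_except_le x {j i : 'I_m} : i != j -> min_except x j <= x ord0 i.
Proof.
move=> ij; apply: ge_inf; last by exists i.
exists (- `|x|) => _ [k _ <-]; rewrite lerNl (le_trans _ (rV_norm_coord x k)) //.
by rewrite -normrN ler_norm.
Qed.

Lemma min_except_ge x j b : (forall i, i != j -> b <= x ord0 i) -> b <= min_except x j.
Proof.
move=> xb; apply: lb_le_inf => [|_ [i ij <-]]; last exact: xb.
by have [i ij] := exists_neq_ord j; exists (x ord0 i), i.
Qed.

Lemma min_except_le_gfun x j : min_except x j <= gfun m x.
Proof.
rewrite gfunE; apply: ub_le_sup; last by exists j.
exists `|x| => _ [k _ <-]; have [i ik] := exists_neq_ord k.
by rewrite (le_trans (min_except_le x ik)) // (le_trans (ler_norm _)) ?rV_norm_coord.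
Qed.

Lemma gfun_le x b : (forall j, min_except x j <= b) -> gfun m x <= b.
Proof.
move=> xb; rewrite gfunE; apply: ge_sup => [|_ [j _ <-]]; last exact: xb.
by exists (min_except x (Ordinal m_ge2)), (Ordinal m_ge2).
Qed.

Lemma gfun_le_add_dist x y : gfun m x <= gfun m y + `|x - y|.
Proof.
apply: gfun_le => j.
have : min_except x j - `|x - y| <= min_except y j.
  apply: min_except_ge => i ij; have := min_except_le x ij.
  have := rV_dist_coord x y i; have := ler_norm (x ord0 i - y ord0 i); lra.
have := min_except_le_gfun y j; lra.
Qed.

Lemma gfun_lipschitz x y : `|gfun m x - gfun m y| <= `|x - y|.
Proof.
have := gfun_le_add_dist x y; have := gfun_le_add_dist y x; rewrite (distrC y).
by rewrite ler_norml => *; apply/andP; split; lra.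
Qed.

Lemma gfun_cube c x : cubeC m c x -> 0 <= gfun m x <= c.
Proof.
move=> xC; rewrite (le_trans _ (min_except_le_gfun x (Ordinal m_ge2))) /=; last first.
  by apply: min_except_ge => i _; case/andP: (xC i).
apply: gfun_le => j; have [i ij] := exists_neq_ord j.
by rewrite (le_trans (min_except_le x ij)) //; case/andP: (xC i).
Qed.

End MaxOfMins.

Lemma dist_mul_le {R : realDomainType} {a a' b b' A L1 L2 : R} :
  `|a - a'| <= L1 -> `|b - b'| <= L2 -> 0 <= b <= 1 -> 0 <= a' <= A ->
  `|a * b - a' * b'| <= L1 + A * L2.
Proof.
move=> aL bL /andP[b0 b1] /andP[a0 aA].
have -> : a * b - a' * b' = (a - a') * b + a' * (b - b') by ring.
rewrite (le_trans (ler_normD _ _)) // lerD //.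
  by rewrite normrM (ger0_norm b0) -[L1]mulr1 ler_pM.
by rewrite normrM (ger0_norm a0) ler_pM.
Qed.

Section CutOff.
Context {R : realType} {m : nat} (c : R).
Hypotheses (m_ge2 : (2 <= m)%N) (c_gt0 : 0 < c).
Implicit Types x y z : 'rV[R]_m.

Let c_ge0 : 0 <= c := ltW c_gt0.

Lemma projC_coord x i : projC m c x ord0 i = clamp c (x ord0 i).
Proof. by rewrite mxE. Qed.

Lemma projC_cube x : cubeC m c (projC m c x).
Proof. by move=> i; rewrite projC_coord clamp_itv. Qed.

Lemma projC_id x : cubeC m c x -> projC m c x = x.
Proof. by move=> xC; apply/rowP => i; rewrite projC_coord clamp_id. Qed.

Lemma projC_lipschitz x y : `|projC m c x - projC m c y| <= `|x - y|.
Proof.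
apply: rV_norm_le => // i; rewrite !mxE.
apply: le_trans (rV_dist_coord x y i); exact: clamp_lipschitz.
Qed.

Lemma dinf_le x z : cubeC m c z -> dinf m c x <= `|x - z|.
Proof. by move=> zC; apply: ge_inf; [exists 0 => _ [? _ <-] | exists z]. Qed.

Lemma dinfE x : dinf m c x = `|x - projC m c x|.
Proof.
apply/eqP; rewrite eq_le dinf_le /=; last exact: projC_cube.
apply: lb_le_inf => [|_ [z zC <-]].
  by exists `|x - projC m c x|, (projC m c x) => //; exact: projC_cube.
apply: rV_norm_le => // i; rewrite !mxE.
apply: le_trans (rV_dist_coord x z i); exact: dist_clamp_le.
Qed.

Lemma dinf_lipschitz x y : `|dinf m c x - dinf m c y| <= `|x - y|.
Proof.
have dinf_le_add u v : dinf m c u <= `|u - v| + dinf m c v.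
  rewrite [dinf m c v]dinfE (le_trans (dinf_le u _ (projC_cube v))) //.
  have -> : u - projC m c v = (u - v) + (v - projC m c v) by rewrite addrA subrK.
  exact: ler_normD.
have := dinf_le_add x y; have := dinf_le_add y x; rewrite (distrC y).
by rewrite ler_norml => *; apply/andP; split; lra.
Qed.

Lemma dinf_le_half x : in_cube_half m c x -> dinf m c x <= c / 2.
Proof.
move/forallP => xh; rewrite dinfE; apply: rV_norm_le; first by rewrite divr_ge0.
by move=> i; rewrite !mxE dist_clamp_le_half.
Qed.

Lemma dinf_gt_half x : ~~ in_cube_half m c x -> c / 2 < dinf m c x.
Proof.
rewrite negb_forall => /existsP[i xi]; rewrite dinfE.
have := rV_dist_coord x (projC m c x) i; rewrite projC_coord.
exact/lt_le_trans/dist_clamp_gt_half.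
Qed.

Lemma gprime_out x : ~~ in_cube_half m c x -> gprime m c x = 0.
Proof. by rewrite /gprime => /negbTE ->. Qed.

Lemma cutoff_itv d : 0 <= d <= c / 2 -> 0 <= 1 - 2 * d / c <= 1.
Proof.
move=> /andP[d0 dc]; rewrite gerBl ?divr_ge0 ?mulr_ge0 // andbT subr_ge0.
by rewrite ler_pdivrMr // mul1r; lra.
Qed.

Lemma gprime_factors_itv x : in_cube_half m c x ->
  0 <= gfun m (projC m c x) <= c /\ 0 <= 1 - 2 * dinf m c x / c <= 1.
Proof.
move=> xh; split; first exact/(gfun_cube m_ge2)/projC_cube.
by rewrite cutoff_itv // dinf_le_half // dinfE normr_ge0.
Qed.

Lemma gprime_bound x : `|gprime m c x| <= c.
Proof.
case: (boolP (in_cube_half m c x)) => xh; last by rewrite gprime_out ?normr0.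
rewrite /gprime xh; have [/andP[g0 gc] /andP[f0 f1]] := gprime_factors_itv _ xh.
by rewrite normrM !ger0_norm // -[leRHS]mulr1 ler_pM.
Qed.

Lemma gprime_cube x : cubeC m c x -> gprime m c x = gfun m x.
Proof.
move=> xC; have xh : in_cube_half m c x.
  by apply/forallP => i; have /andP[? ?] := xC i; apply/andP; split; lra.
by rewrite /gprime xh dinfE projC_id // subrr normr0 mulr0 mul0r subr0 mulr1.
Qed.

Lemma gprime_le_dist_out x y : ~~ in_cube_half m c y -> `|gprime m c x| <= 2 * `|x - y|.
Proof.
move=> yh; case: (boolP (in_cube_half m c x)) => xh; last first.
  by rewrite gprime_out ?normr0 ?mulr_ge0.
rewrite /gprime xh; have [/andP[g0 gc] /andP[f0 f1]] := gprime_factors_itv _ xh.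
have cF : c * (1 - 2 * dinf m c x / c) = c - 2 * dinf m c x by field; rewrite gt_eqF.
rewrite normrM !ger0_norm // (le_trans (ler_wpM2r f0 gc)) // cF.
have := dinf_gt_half _ yh; have := dinf_lipschitz x y; rewrite ler_norml => /andP[? ?]; lra.
Qed.

Lemma gprime_lipschitz x y : `|gprime m c x - gprime m c y| <= 3 * `|x - y|.
Proof.
case: (boolP (in_cube_half m c y)) => yh; last first.
  rewrite (gprime_out _ yh) subr0 (le_trans (gprime_le_dist_out x _ yh)) //.
  by apply: ler_wpM2r => //; lra.
case: (boolP (in_cube_half m c x)) => xh; last first.
  rewrite (gprime_out _ xh) sub0r normrN (le_trans (gprime_le_dist_out y _ xh)) //.
  by rewrite distrC; apply: ler_wpM2r => //; lra.
rewrite /gprime xh yh; have [_ Fx] := gprime_factors_itv _ xh.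
have [gy _] := gprime_factors_itv _ yh.
have dF : `|(1 - 2 * dinf m c x / c) - (1 - 2 * dinf m c y / c)| <= 2 / c * `|x - y|.
  have -> : (1 - 2 * dinf m c x / c) - (1 - 2 * dinf m c y / c) =
    2 / c * (dinf m c y - dinf m c x) by field; rewrite gt_eqF.
  by rewrite normrM ger0_norm ?divr_ge0 // ler_wpM2l ?divr_ge0 // distrC dinf_lipschitz.
rewrite (le_trans (dist_mul_le (gfun_lipschitz m_ge2 _ _) dF Fx gy)) //.
rewrite mulrA mulrCA divff ?gt_eqF // mulr1 (le_trans (lerD (projC_lipschitz x y) (lexx _))) //.
lra.
Qed.

Lemma gprime_support_compact : compact (closure [set x | gprime m c x != 0]).
Proof.
pose I (i : 'I_m) := `[- (c / 2), 3 * c / 2]%classic.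
pose B := [set x : 'rV[R]_m | forall i, I i (x ord0 i)].
have cB : compact B by apply: rV_compact => i; exact: segment_compact.
have clB : closed B by apply: compact_closed => //; exact: norm_hausdorff.
apply: (subclosed_compact (@closed_closure _ _) cB).
rewrite [X in _ `<=` X](closure_id B).1 //; apply: closureS => x /=.
case: (boolP (in_cube_half m c x)) => [/forallP xh _ i | /gprime_out -> ]; last by rewrite eqxx.
by rewrite /I /= in_itv /= xh.
Qed.

End CutOff.

Section KullbackLeibler.
Context {R : realType} {X : finType}.
Implicit Types (q p : X -> R) (a b : R).

Lemma dist_le1 q x : is_dist X q -> q x <= 1.
Proof. by move=> [q0 <-]; rewrite (bigD1 x) //= lerDl sumr_ge0. Qed.

Lemma KL_term_ge a b : 0 <= a -> 0 < b -> a - b <= a * ln (a / b).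
Proof.
rewrite le_eqVlt => /orP[/eqP<- b0 | a0 b0]; first by rewrite mul0r sub0r oppr_le0 ltW.
have ba : 0 < b / a by rewrite divr_gt0.
have := @le_ln1Dx R (b / a - 1) ltac:(lra); rewrite addrC subrK.
have -> : ln (a / b) = - ln (b / a) by rewrite -lnV ?posrE // invf_div.
have : a * (b / a) = b by rewrite mulrC divfK ?gt_eqF.
nra.
Qed.

Lemma KL_ge0 q p : is_dist X q -> is_dist X p -> (forall x, 0 < p x) -> 0 <= KL X q p.
Proof.
move=> [q0 q1] [_ p1] p_gt0; rewrite -(subrr 1) -{1}q1 -p1 -sumrB.
by apply: ler_sum => x _; exact: KL_term_ge.
Qed.

Lemma KL_le_ln q p (eps : R) : is_dist X q -> 0 < eps -> (forall x, eps <= p x) ->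
  KL X q p <= ln eps^-1.
Proof.
move=> qd eps0 p_ge; have [q0 q1] := qd.
rewrite -[ln _]mul1r -q1 mulr_suml; apply: ler_sum => x _.
have [->|qx] := eqVneq (q x) 0; first by rewrite !mul0r.
have px : 0 < p x := lt_le_trans eps0 (p_ge x).
have qx0 : 0 < q x by rewrite lt_neqAle eq_sym qx q0.
rewrite ler_wpM2l // ler_ln ?posrE ?divr_gt0 ?invr_gt0 //.
apply: (@le_trans _ _ (1 / p x)).
  by apply: ler_wpM2r; [rewrite invr_ge0 ltW | exact: dist_le1 _ x qd].
by rewrite mul1r lef_pV2 ?posrE.
Qed.

End KullbackLeibler.

Lemma mul_le_pos_part {R : realDomainType} (k p c : R) : 0 <= k <= c ->
  k * p <= c * Num.max p 0.
Proof.
move=> /andP[k0 kc].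
have p_le : p <= Num.max p 0 by rewrite le_max lexx.
have max_ge0 : 0 <= Num.max p 0 by rewrite le_max lexx orbT.
nra.
Qed.

Section HamiltonianBounds.
Context {R : realType} {X : finType} {K m : nat}.
Variables (eps : R) (nu : 'I_m -> 'I_K -> X -> R).
Hypotheses (K_gt0 : (0 < K)%N) (m_gt0 : (0 < m)%N) (eps_gt0 : 0 < eps).
Hypotheses (nu_dist : forall i a, is_dist X (nu i a)) (nu_ge : forall i a x, eps <= nu i a x).
Implicit Types (p : 'rV[R]_m) (Q : 'I_K -> X -> R) (w : 'I_K -> R).

Definition payoff Q w p : R :=
  \sum_(i < m) \sum_(a < K) w a * KL X (Q a) (nu i a) * p ord0 i.

Lemma HamE p : Ham X K m nu p = inf [set sup [set payoff Q w p | w in simplexK K] | Q in distK X K].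
Proof. by []. Qed.

Lemma payoffN Q w p : payoff Q w (- p) = - payoff Q w p.
Proof.
rewrite /payoff -sumrN; apply: eq_bigr => i _; rewrite -sumrN.
by apply: eq_bigr => a _; rewrite mxE mulrN.
Qed.

Lemma payoff_le Q w p : distK X K Q -> simplexK K w ->
  payoff Q w p <= ln eps^-1 * \sum_i Num.max (p ord0 i) 0.
Proof.
move=> Qd [w0 w1]; rewrite /payoff mulr_sumr; apply: ler_sum => i _.
rewrite -mulr_suml; apply: mul_le_pos_part; apply/andP; split.
  apply: sumr_ge0 => a _; rewrite mulr_ge0 // KL_ge0 // => x.
  exact: lt_le_trans eps_gt0 (nu_ge i a x).
rewrite -[ln _]mul1r -w1 mulr_suml; apply: ler_sum => a _.
by rewrite ler_wpM2l // KL_le_ln.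
Qed.

Let a0 : 'I_K := Ordinal K_gt0.
Let w0 : 'I_K -> R := fun a => (a == a0)%:R.
Let i0 : 'I_m := Ordinal m_gt0.

Lemma simplex_w0 : simplexK K w0.
Proof.
split=> [a|]; first by rewrite ler0n.
by rewrite (bigD1 a0) //= big1 ?addr0 /w0 ?eqxx // => a /negbTE ->.
Qed.

Lemma distK_nu : distK X K (nu i0).
Proof. by move=> a; exact: nu_dist. Qed.

Lemma sup_payoff_le Q p : distK X K Q ->
  sup [set payoff Q w p | w in simplexK K] <= ln eps^-1 * \sum_i Num.max (p ord0 i) 0.
Proof.
move=> Qd; apply: ge_sup => [|_ [w wd <-]]; last exact: payoff_le.
by exists (payoff Q w0 p), w0; first exact: simplex_w0.
Qed.

Lemma sup_payoff_ge Q p : distK X K Q ->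
  - (ln eps^-1 * \sum_i Num.max (- p ord0 i) 0) <= sup [set payoff Q w p | w in simplexK K].
Proof.
move=> Qd; set S := [set payoff Q w p | w in simplexK K].
have S_ub : has_ubound S.
  by exists (ln eps^-1 * \sum_i Num.max (p ord0 i) 0) => _ [w wd <-]; exact: payoff_le.
have S_w0 : S (payoff Q w0 p) by exists w0; first exact: simplex_w0.
apply: le_trans (ub_le_sup S_ub S_w0); rewrite lerNl -payoffN.
by apply: le_trans (payoff_le _ _ _ Qd simplex_w0) _; under eq_bigr do rewrite mxE.
Qed.

Lemma Ham_le p : Ham X K m nu p <= ln eps^-1 * \sum_i Num.max (p ord0 i) 0.
Proof.
rewrite HamE; apply: le_trans (sup_payoff_le _ p distK_nu).
apply: ge_inf; last by exists (nu i0); first exact: distK_nu.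
by exists (- (ln eps^-1 * \sum_i Num.max (- p ord0 i) 0)) => _ [Q Qd <-]; exact: sup_payoff_ge.
Qed.

Lemma oppr_Ham_opp_le p : - Ham X K m nu (- p) <= ln eps^-1 * \sum_i Num.max (p ord0 i) 0.
Proof.
rewrite lerNl HamE; apply: lb_le_inf => [|_ [Q Qd <-]].
  by exists (sup [set payoff (nu i0) w (- p) | w in simplexK K]), (nu i0); first exact: distK_nu.
apply: le_trans (sup_payoff_ge _ _ Qd).
by under [in leRHS]eq_bigr do rewrite mxE opprK.
Qed.

End HamiltonianBounds.

Lemma is_diff_sum {R : realType} {V W : normedModType R} {n} {f df : 'I_n -> V -> W} {x : V} :
  (forall i, is_diff x (f i) (df i)) -> is_diff x (\sum_i f i) (\sum_i df i).
Proof.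
move=> fdf; apply: (big_rec2 (fun g dg => is_diff x g dg)); first exact: is_diff_cst.
by move=> i g dg _ gdg; apply: is_diffD.
Qed.

Lemma is_diff_expR {R : realType} (y : R) : is_diff y expR (fun h => h * expR y).
Proof.
have dE : differentiable expR y by apply/derivable1_diffP; exact: derivable_expR.
apply: DiffDef => //; rewrite diff1E //; apply/funext => h; rewrite derive1E.
by rewrite /GRing.scale /= (congr1 (fun f => f y) (@derive_expR R)).
Qed.

Section LinearForm.
Context {R : realType} {m : nat}.
Implicit Types (w : 'rV[R]_m) (s : R) (z : 'rV[R]_m * R).

Definition lin_form w s z : R := \sum_i w ord0 i * z.1 ord0 i + s * z.2.

Lemma lin_form_is_linear w s : linear (lin_form w s).
Proof.
move=> a y z; rewrite /lin_form /=.
rewrite (eq_bigr (fun i => a * (w ord0 i * y.1 ord0 i) + w ord0 i * z.1 ord0 i)); last first.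
  by move=> i _; rewrite !mxE; ring.
by rewrite big_split /= -mulr_sumr /GRing.scale /=; ring.
Qed.

HB.instance Definition _ w s :=
  GRing.isLinear.Build R _ R *:%R (lin_form w s) (lin_form_is_linear w s).

Lemma lin_form_le w s z : `|lin_form w s z| <= (\sum_i `|w ord0 i| + `|s|) * `|z|.
Proof.
have coord1 i : `|z.1 ord0 i| <= `|z|.
  by rewrite (le_trans (rV_norm_coord _ i)) // prod_normE le_max lexx.
have coord2 : `|z.2| <= `|z| by rewrite prod_normE le_max lexx orbT.
rewrite /lin_form mulrDl (le_trans (ler_normD _ _)) // lerD //.
  rewrite mulr_suml (le_trans (ler_norm_sum _ _ _)) // ler_sum // => i _.
  by rewrite normrM ler_wpM2l.
by rewrite normrM ler_wpM2l.
Qed.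

Lemma lin_form_continuous w s : continuous (lin_form w s).
Proof.
apply: bounded_linear_continuous; apply/linear_boundedP.
by near=> r => z; rewrite (le_trans (lin_form_le w s z)) // ler_wpM2r.
Unshelve. all: by end_near.
Qed.

Lemma is_diff_lin_form w s z : is_diff z (lin_form w s) (lin_form w s).
Proof.
have lc := lin_form_continuous w s.
by apply: DiffDef; [exact/linear_differentiable | rewrite diff_lin].
Qed.

Lemma is_diff_expR_affine w s b z :
  is_diff z (fun y => expR (lin_form w s y + b))
    (fun v => expR (lin_form w s z + b) * lin_form w s v).
Proof.
have -> : (fun y => expR (lin_form w s y + b)) = expR \o (lin_form w s + cst b) by [].
apply: is_diff_eq (is_diff_comp (is_diffD (is_diff_lin_form w s z) (is_diff_cst b z))
  (is_diff_expR (lin_form w s z + b))) _.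
by apply/funext => v /=; rewrite !fctE addr0 mulrC.
Qed.

Lemma lin_form0 s z : lin_form 0 s z = s * z.2.
Proof. by rewrite /lin_form big1 ?add0r // => i _; rewrite mxE mul0r. Qed.

Lemma lin_form_delta a i s z : lin_form (a *: delta_mx ord0 i) s z = a * z.1 ord0 i + s * z.2.
Proof.
rewrite /lin_form (bigD1 i) //= big1 ?addr0 => [|j /negbTE ji]; first by rewrite !mxE !eqxx mulr1.
by rewrite !mxE ji andbF mulr0 mul0r.
Qed.

Lemma lin_form_dir_t w s : lin_form w s (0, 1) = s.
Proof. by rewrite /lin_form big1 ?add0r ?mulr1 // => i _; rewrite mxE mulr0. Qed.

Lemma lin_form_dir_x w s j : lin_form w s (delta_mx ord0 j, 0) = w ord0 j.
Proof.
rewrite /lin_form mulr0 addr0 (bigD1 j) //= big1 ?addr0 => [|i /negbTE ij].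
  by rewrite mxE !eqxx mulr1.
by rewrite mxE ij andbF mulr0.
Qed.

End LinearForm.

Lemma lt_of_mul_expR_lt {R : realType} (lam mu s rho : R) : 0 < lam -> 0 < mu ->
  lam * expR (mu * s) < lam * mu * rho -> s < rho.
Proof.
move=> lam_gt0 mu_gt0; apply: contraTlt => rho_le.
have := expR_ge1Dx (mu * s); have : mu * rho <= mu * s by rewrite ler_wpM2l // ltW.
nra.
Qed.

Section BarrierTestFunction.
Context {R : realType} {m : nat}.
Variables (eta lam mu c t0 : R) (x0 : 'rV[R]_m).
Implicit Types (z : 'rV[R]_m * R).

Definition barrier_t z := expR (mu * (t0 - z.2)).
Definition barrier_lo z i := expR (mu * (x0 ord0 i - z.1 ord0 i)).
Definition barrier_hi z i := expR (mu * (z.1 ord0 i - x0 ord0 i - c * (z.2 - t0))).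

Definition psi z := eta * (1 - z.2) + lam * barrier_t z +
  \sum_i (lam * barrier_lo z i + lam * barrier_hi z i).

Let e i : 'rV[R]_m := delta_mx ord0 i.

Definition dpsi z (v : 'rV[R]_m * R) :=
  lin_form 0 (- eta) v + lam * barrier_t z * lin_form 0 (- mu) v +
  \sum_i (lam * barrier_lo z i * lin_form (- mu *: e i) 0 v +
          lam * barrier_hi z i * lin_form (mu *: e i) (- (mu * c)) v).

Lemma is_diff_psi z : is_diff z psi (dpsi z).
Proof.
have Et y : barrier_t y = expR (lin_form 0 (- mu) y + mu * t0).
  by rewrite lin_form0 /barrier_t; congr expR; ring.
have Elo y i : barrier_lo y i = expR (lin_form (- mu *: e i) 0 y + mu * x0 ord0 i).
  by rewrite lin_form_delta /barrier_lo; congr expR; ring.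
have Ehi y i :
    barrier_hi y i = expR (lin_form (mu *: e i) (- (mu * c)) y + mu * (c * t0 - x0 ord0 i)).
  by rewrite lin_form_delta /barrier_hi; congr expR; ring.
have -> : psi = lin_form 0 (- eta) + cst eta +
    lam *: (fun y => expR (lin_form 0 (- mu) y + mu * t0)) +
    \sum_i (lam *: (fun y => expR (lin_form (- mu *: e i) 0 y + mu * x0 ord0 i)) +
            lam *: (fun y =>
              expR (lin_form (mu *: e i) (- (mu * c)) y + mu * (c * t0 - x0 ord0 i)))).
  apply/funext => y; rewrite /psi !fctE fct_sumE lin_form0 Et.
  congr (_ + _ + _); first ring.
  by apply: eq_bigr => i _; rewrite !fctE Elo Ehi.
have d_head := is_diffD (is_diffD (is_diff_lin_form 0 (- eta) z) (is_diff_cst eta z))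
  (is_diffZ lam (is_diff_expR_affine 0 (- mu) (mu * t0) z)).
have d_sum := is_diff_sum (fun i => is_diffD
  (is_diffZ lam (is_diff_expR_affine (- mu *: e i) 0 (mu * x0 ord0 i) z))
  (is_diffZ lam (is_diff_expR_affine (mu *: e i) (- (mu * c)) (mu * (c * t0 - x0 ord0 i)) z))).
apply: is_diff_eq (is_diffD d_head d_sum) _.
apply/funext => v; rewrite /dpsi !fctE fct_sumE addr0 Et -mulrA; congr (_ + _ + _).
by apply: eq_bigr => i _; rewrite !fctE Elo Ehi -!mulrA.
Qed.

Lemma psi_differentiable z : differentiable psi z.
Proof. by have [] := is_diff_psi z. Qed.

Lemma diff_psi z : 'd psi z = dpsi z :> (_ -> R).
Proof. by have [] := is_diff_psi z. Qed.

Lemma d_t_psi z :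
  d_t m psi z = - eta - lam * mu * barrier_t z - c * \sum_i lam * mu * barrier_hi z i.
Proof.
rewrite /d_t diff_psi /dpsi !lin_form_dir_t mulr_sumr -sumrN.
by under eq_bigr do rewrite !lin_form_dir_t; congr (_ + _); [ring | apply: eq_bigr => i _; ring].
Qed.

Lemma grad_x_psi z j :
  grad_x m psi z ord0 j = lam * mu * barrier_hi z j - lam * mu * barrier_lo z j.
Proof.
rewrite /grad_x mxE diff_psi /dpsi !lin_form_dir_x !mxE mulr0 !add0r (bigD1 j) //= big1 ?addr0.
  by rewrite !lin_form_dir_x /e !mxE !eqxx !mulr1; ring.
by move=> i /negbTE ij; rewrite !lin_form_dir_x /e !mxE eq_sym ij andbF !mulr0 addr0.
Qed.

Lemma psi_strict_supersolution (H : 'rV[R]_m -> R) z :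
  (forall p, H p <= c * \sum_i Num.max (p ord0 i) 0) -> 0 < eta -> 0 <= lam -> 0 <= mu -> 0 <= c ->
  d_t m psi z + H (grad_x m psi z) < 0.
Proof.
move=> H_le eta_gt0 lam_ge0 mu_ge0 c_ge0; rewrite d_t_psi.
have lm0 : 0 <= lam * mu by rewrite mulr_ge0.
have grad_le : \sum_i Num.max (grad_x m psi z ord0 i) 0 <= \sum_i lam * mu * barrier_hi z i.
  apply: ler_sum => i _; rewrite grad_x_psi ge_max mulr_ge0 ?expR_ge0 // andbT.
  by rewrite gerBl mulr_ge0 ?expR_ge0.
have := H_le (grad_x m psi z); have := ler_wpM2l c_ge0 grad_le.
have : 0 <= lam * mu * barrier_t z by rewrite mulr_ge0 ?expR_ge0.
lra.
Qed.

Lemma psi_center : psi (x0, t0) = eta * (1 - t0) + lam * (1 + 2 * m%:R).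
Proof.
rewrite /psi /barrier_t /barrier_lo /barrier_hi /= !(subrr, mulr0, subr0, expR0).
under eq_bigr do rewrite !(subrr, mulr0, subr0, expR0).
by rewrite sumr_const card_ord -mulr_natr; ring.
Qed.

Hypotheses (eta_ge0 : 0 <= eta) (lam_ge0 : 0 <= lam).

Lemma psi_ge_terms z : z.2 <= 1 ->
  [/\ lam * barrier_t z <= psi z, forall i, lam * barrier_lo z i <= psi z
    & forall i, lam * barrier_hi z i <= psi z].
Proof.
move=> z1; have etat : 0 <= eta * (1 - z.2) by rewrite mulr_ge0 // subr_ge0.
have term_ge0 i : 0 <= lam * barrier_lo z i /\ 0 <= lam * barrier_hi z i.
  by rewrite !mulr_ge0 ?expR_ge0.
have sum_ge0 (P : pred 'I_m) : 0 <= \sum_(i | P i) (lam * barrier_lo z i + lam * barrier_hi z i).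
  by apply: sumr_ge0 => i _; have [] := term_ge0 i; lra.
have sum_all_ge0 : 0 <= \sum_i (lam * barrier_lo z i + lam * barrier_hi z i) := sum_ge0 xpredT.
have bt0 : 0 <= lam * barrier_t z by rewrite mulr_ge0 ?expR_ge0.
split; first by rewrite /psi; lra.
all: move=> i; have [lo0 hi0] := term_ge0 i.
all: have : 0 <= \sum_(j | j != i) (lam * barrier_lo z j + lam * barrier_hi z j) := sum_ge0 _.
all: by move=> rest; rewrite /psi (bigD1 i) //=; lra.
Qed.

Lemma psi_ge0 z : z.2 <= 1 -> 0 <= psi z.
Proof.
by move=> z1; have [bt _ _] := psi_ge_terms z z1; rewrite (le_trans _ bt) // mulr_ge0 ?expR_ge0.
Qed.

Lemma psi_localizes z (rho : R) : 0 < lam -> 0 < mu -> 0 <= c -> 0 <= t0 -> z.2 <= 1 ->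
  psi z < lam * mu * rho ->
  t0 - rho < z.2 /\ forall i, x0 ord0 i - rho < z.1 ord0 i < x0 ord0 i + c + rho.
Proof.
move=> lam_gt0 mu_gt0 c_ge0 t0_ge0 z1 psi_lt; have [bt blo bhi] := psi_ge_terms z z1.
have expR_lt s : lam * expR (mu * s) <= psi z -> s < rho.
  by move=> le_psi; exact: lt_of_mul_expR_lt lam_gt0 mu_gt0 (le_lt_trans le_psi psi_lt).
split=> [|i]; first by have := expR_lt (t0 - z.2) bt; lra.
have := expR_lt (x0 ord0 i - z.1 ord0 i) (blo i).
have := expR_lt (z.1 ord0 i - x0 ord0 i - c * (z.2 - t0)) (bhi i).
have : c * (z.2 - t0) <= c by rewrite -[leRHS]mulr1 ler_wpM2l //; lra.
by move=> *; apply/andP; split; lra.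
Qed.

End BarrierTestFunction.

Lemma exists_psi_parameters {R : realType} {m : nat} (c : R) (x0 : 'rV[R]_m) {t0 delta M rho : R} :
  0 <= t0 -> 0 < delta -> 0 < M -> 0 < rho ->
  exists eta lam mu : R, [/\ 0 < eta, 0 < lam, 0 < mu, lam * mu * rho = M
                            & psi eta lam mu c t0 x0 (x0, t0) < delta].
Proof.
move=> t0_ge0 delta_gt0 M_gt0 rho_gt0.
have m1_gt0 : 0 < 4 * (m%:R + 1) :> R by rewrite mulr_gt0 // ltr_wpDl.
pose lam := delta / (4 * (m%:R + 1)).
have lam_gt0 : 0 < lam by rewrite divr_gt0.
have lamE : lam * (4 * (m%:R + 1)) = delta by rewrite divfK // gt_eqF.
exists (delta / 4), lam, (M / (lam * rho)); split.
- by rewrite divr_gt0.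
- exact: lam_gt0.
- by rewrite divr_gt0 ?mulr_gt0.
- by field; rewrite !gt_eqF.
- by rewrite psi_center; nra.
Qed.

Section Box.
Context {R : realType} {m : nat}.
Implicit Types (D a : R) (y z : 'rV[R]_m * R).

Definition box (x0 : 'rV[R]_m) D a : set ('rV[R]_m * R) :=
  [set z : 'rV[R]_m * R | (forall i, `|z.1 ord0 i - x0 ord0 i| <= D) /\ a <= z.2 <= 1].

Lemma box_compact (x0 : 'rV[R]_m) D a : compact (box x0 D a).
Proof.
pose I i := `[x0 ord0 i - D, x0 ord0 i + D]%classic.
have -> : box x0 D a = [set v : 'rV[R]_m | forall i, I i (v ord0 i)] `*` `[a, 1]%classic.
  apply/seteqP; split=> z [zx zt]; split; rewrite /= ?in_itv //= => i; have := zx i.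
    by rewrite /I /= in_itv /= ler_norml => /andP[? ?]; apply/andP; split; lra.
  by rewrite /I /= in_itv /= ler_norml => /andP[? ?]; apply/andP; split; lra.
by apply: compact_setX; [apply: rV_compact => i |]; exact: segment_compact.
Qed.

Lemma box_sub_strip (x0 : 'rV[R]_m) D a : 0 <= a -> box x0 D a `<=` [set z | 0 <= z.2 <= 1].
Proof. by move=> a0 z [_ /andP[az z1]]; rewrite /= z1 (le_trans a0). Qed.

Lemma near_box (x0 : 'rV[R]_m) D a z : (forall i, `|z.1 ord0 i - x0 ord0 i| < D) -> a < z.2 < 1 ->
  \forall y \near z, box x0 D a y.
Proof.
move=> zD /andP[az z1].
have near_z e : 0 < e -> \forall y \near z, `|z - y| < e.
  exact: (@cvgr_dist_lt _ _ _ (nbhs z) _ id z cvg_id).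
have x_near i : \forall y \near z, `|(y.1 : 'rV[R]_m) ord0 i - x0 ord0 i| <= D.
  have := zD i; rewrite -subr_gt0 => /near_z; apply: filterS => y zy.
  have : `|z.1 ord0 i - y.1 ord0 i| <= `|z - y|.
    by rewrite (le_trans (rV_dist_coord _ _ i)) // prod_normE le_max lexx.
  have := ler_normB (z.1 ord0 i - x0 ord0 i) (z.1 ord0 i - y.1 ord0 i).
  rewrite opprB addrC addrA subrK distrC; lra.
have t_near : \forall y \near z, a <= (y.2 : R) <= 1.
  have e_gt0 : 0 < Num.min (z.2 - a) (1 - z.2) by rewrite lt_min !subr_gt0 az z1.
  apply: filterS (near_z _ e_gt0) => y zy.
  have : `|z.2 - y.2| < Num.min (z.2 - a) (1 - z.2).
    by rewrite (le_lt_trans _ zy) // prod_normE le_max lexx orbT.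
  by rewrite lt_min !ltr_norml => /andP[/andP[? ?] /andP[? ?]]; apply/andP; split; lra.
by apply: filterS2 (@filter_forall _ _ _ _ _ x_near) t_near => y ? ?; split.
Qed.

End Box.

Section FiniteSpeedOfPropagation.
Context {R : realType} {m : nat}.
Variables (c : R) (H : 'rV[R]_m -> R) (U : 'rV[R]_m -> R -> R).
Hypotheses (c_ge0 : 0 <= c) (H_le : forall p, H p <= c * \sum_i Num.max (p ord0 i) 0).
Hypothesis U_cont :
  {within [set z : 'rV[R]_m * R | 0 <= z.2 <= 1], continuous (fun z => U z.1 z.2)}.
Hypothesis U_sub : forall (phi : 'rV[R]_m * R -> R) (z0 : 'rV[R]_m * R),
  (forall z, differentiable phi z) -> 0 < z0.2 < 1 ->
  (\forall z \near z0, U z.1 z.2 - phi z <= U z0.1 z0.2 - phi z0) ->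
  d_t m phi z0 + H (grad_x m phi z0) >= 0.

Lemma sub_psi_no_local_max (eta lam mu t0 : R) (x0 : 'rV[R]_m) (z0 : 'rV[R]_m * R) :
  0 < eta -> 0 <= lam -> 0 <= mu -> 0 < z0.2 < 1 ->
  ~ \forall z \near z0, U z.1 z.2 - psi eta lam mu c t0 x0 z <=
                         U z0.1 z0.2 - psi eta lam mu c t0 x0 z0.
Proof.
move=> eta_gt0 lam_ge0 mu_ge0 z0_itv z0_max.
have := U_sub _ _ (psi_differentiable eta lam mu c t0 x0) z0_itv z0_max.
by rewrite leNgt psi_strict_supersolution.
Qed.

Lemma sub_max_on_box (x0 : 'rV[R]_m) {D a : R} (phi : 'rV[R]_m * R -> R) :
  0 <= D -> 0 <= a <= 1 -> continuous phi ->
  exists2 zs, box x0 D a zs &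
    forall z, box x0 D a z -> U z.1 z.2 - phi z <= U zs.1 zs.2 - phi zs.
Proof.
move=> D_ge0 /andP[a_ge0 a_le1] phi_cont.
have box1 : box x0 D a (x0, 1) by split=> [i|]; rewrite /= ?subrr ?normr0 ?a_le1 ?lexx.
have U_phi_cont : {within box x0 D a, continuous (fun z => U z.1 z.2 - phi z)}.
  move=> z; apply: continuousB; last exact: continuous_subspaceT.
  exact: continuous_subspaceW (box_sub_strip x0 D a a_ge0) U_cont z.
have [zs zsK zs_max] := compact_EVT_max (ex_intro _ _ box1) (box_compact x0 D a) U_phi_cont.
by exists zs => [|z zK]; [rewrite inE in zsK | apply: zs_max; rewrite inE].
Qed.

Lemma U_bounded_on_box (x0 : 'rV[R]_m) {D a : R} : 0 <= D -> 0 <= a <= 1 ->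
  exists2 M, 0 < M & forall z, box x0 D a z -> U z.1 z.2 <= M.
Proof.
move=> D_ge0 a_itv.
have [zM _ zM_max] := sub_max_on_box x0 (cst 0) D_ge0 a_itv (@cst_continuous _ _ (0 : R)).
exists (Num.max (U zM.1 zM.2) 1) => [|z zK]; first by rewrite lt_max ltr01 orbT.
by rewrite le_max; have := zM_max z zK; rewrite !subr0 => ->.
Qed.

Lemma subsolution_le0 (x0 : 'rV[R]_m) (t0 : R) (k : 'I_m) (rho0 : R) : 0 < t0 < 1 -> 0 < rho0 ->
  (forall x : 'rV[R]_m, x0 ord0 k - rho0 < x ord0 k < x0 ord0 k + c + rho0 -> U x 1 <= 0) ->
  U x0 t0 <= 0.
Proof.
move=> /andP[t0_gt0 t0_lt1] rho0_gt0 U1_le0; rewrite leNgt; apply/negP => delta_gt0.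
pose a := t0 / 2; pose rho := Num.min rho0 a; pose D := rho + c + 1.
have rho_gt0 : 0 < rho by rewrite lt_min rho0_gt0 divr_gt0.
have [rho_le_rho0 rho_le_a] : rho <= rho0 /\ rho <= a by rewrite !ge_min !lexx orbT.
have D_ge0 : 0 <= D by rewrite /D !addr_ge0 // ltW.
have a_itv : 0 <= a <= 1 by rewrite /a; apply/andP; split; lra.
have [M M_gt0 U_le_M] := U_bounded_on_box x0 D_ge0 a_itv.
have [eta [lam [mu [eta_gt0 lam_gt0 mu_gt0 muE ps_center]]]] :=
  exists_psi_parameters c x0 (ltW t0_gt0) delta_gt0 M_gt0 rho_gt0.
pose ps := psi eta lam mu c t0 x0.
have [zs zs_box zs_max] := sub_max_on_box x0 ps D_ge0 a_itv
  (fun z => differentiable_continuous (psi_differentiable eta lam mu c t0 x0 z)).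
have gap : 0 < U zs.1 zs.2 - ps zs.
  have center : box x0 D a (x0, t0).
    by split=> [i|]; rewrite /= ?subrr ?normr0 // /a; apply/andP; split; lra.
  by have := zs_max _ center; rewrite /= /ps; lra.
have [_ /andP[zs_a zs_1]] := zs_box.
have ps_lt : ps zs < lam * mu * rho by rewrite muE (lt_le_trans _ (U_le_M _ zs_box)) // -subr_gt0.
have [t_close x_close] := psi_localizes eta lam mu c t0 x0 (ltW eta_gt0) (ltW lam_gt0) zs rho
  lam_gt0 mu_gt0 c_ge0 (ltW t0_gt0) zs_1 ps_lt.
have zs_lt1 : zs.2 < 1.
  rewrite lt_neqAle zs_1 andbT; apply/negP => /eqP zs1.
  have /andP[? ?] := x_close k.
  have : U zs.1 zs.2 <= 0 by rewrite zs1 U1_le0 //; apply/andP; split; lra.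
  by have := psi_ge0 eta lam mu c t0 x0 (ltW eta_gt0) (ltW lam_gt0) zs zs_1; rewrite -/ps; lra.
have zs_inside i : `|zs.1 ord0 i - x0 ord0 i| < D.
  have := c_ge0; have /andP[? ?] := x_close i.
  by rewrite /D ltr_norml => ?; apply/andP; split; lra.
have zs_itv : a < zs.2 < 1 by rewrite zs_lt1 andbT /a; lra.
apply: (sub_psi_no_local_max eta lam mu t0 x0 zs) => //; try exact: ltW.
  by rewrite zs_lt1 andbT; lra.
by apply: filterS (near_box x0 D a zs zs_inside zs_itv) => z; apply: zs_max.
Qed.

End FiniteSpeedOfPropagation.

Section ViscosityFacts.
Context {R : realType} {m : nat}.
Implicit Types (V : 'rV[R]_m -> R -> R) (H : 'rV[R]_m -> R).

Lemma supersolution_oppr_subsolution H V :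
  (forall (phi : 'rV[R]_m * R -> R) (z0 : 'rV[R]_m * R),
     (forall z, differentiable phi z) -> 0 < z0.2 < 1 ->
     (\forall z \near z0, V z.1 z.2 - phi z >= V z0.1 z0.2 - phi z0) ->
     d_t m phi z0 + H (grad_x m phi z0) <= 0) ->
  forall (phi : 'rV[R]_m * R -> R) (z0 : 'rV[R]_m * R),
     (forall z, differentiable phi z) -> 0 < z0.2 < 1 ->
     (\forall z \near z0, - V z.1 z.2 - phi z <= - V z0.1 z0.2 - phi z0) ->
     d_t m phi z0 - H (- grad_x m phi z0) >= 0.
Proof.
move=> V_super phi z0 phi_diff z0_itv z0_max.
have dN : 'd (- phi) z0 = - ('d phi z0 : _ -> R) :> (_ -> R) by rewrite diffN.
have gradN : grad_x m (- phi) z0 = - grad_x m phi z0 by apply/rowP => i; rewrite !mxE dN.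
have z0_min : \forall z \near z0, V z.1 z.2 - (- phi) z >= V z0.1 z0.2 - (- phi) z0.
  by apply: filterS z0_max => z; rewrite !fctE; lra.
have := V_super (- phi) z0 (fun z => differentiableN (phi_diff z)) z0_itv z0_min.
rewrite gradN /d_t dN.
have -> : (- ('d phi z0 : _ -> R)) (0, 1) = - 'd phi z0 (0, 1) by [].
lra.
Qed.
Lemma eq0_at_initial_time V x :
  {within [set z : 'rV[R]_m * R | 0 <= z.2 <= 1], continuous (fun z => V z.1 z.2)} ->
  (forall s, 0 < s < 1 -> V x s = 0) -> V x 0 = 0.
Proof.
move=> V_cont V_eq0; apply/eqP/negPn/negP => V0_neq0.
have V0_gt0 : 0 < `|V x 0| by rewrite normr_gt0.
have V_cont0 := (subspace_continuousP _ _).1 V_cont (x, 0) (ltac:(by rewrite /= lexx ler01)).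
have := cvgr_dist_lt _ _ V_cont0 _ V0_gt0.
move=> /(_ (within_filter _ _)); rewrite near_withinE => /nbhs_normP [d d_pos near0].
have d_gt0 : 0 < d := d_pos.
have [s [s_gt0 s_le_d s_le_1]] : exists s, [/\ 0 < s, s <= d / 2 & s <= 1 / 2].
  exists (Num.min (d / 2) (1 / 2)); rewrite lt_min !ge_min !lexx orbT.
  by split=> //; apply/andP; split; lra.
have xs_near : ball_ Num.Def.normr (x, 0) d (x, s).
  rewrite /ball_ /= prod_normE /= subrr normr0 sub0r normrN gtr0_norm //.
  by rewrite gt_max; apply/andP; split; lra.
have s_itv : 0 <= s <= 1 by apply/andP; split; lra.
have : `|V x 0 - V x s| < `|V x 0| := near0 (x, s) xs_near s_itv.
by rewrite (V_eq0 s) ?subr0 ?ltxx //; apply/andP; split; lra.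
Qed.

Lemma viscosity_eq0_ahead_of_slab {c : R} {H G : 'rV[R]_m -> R} {V}
    {x : 'rV[R]_m} {k : 'I_m} {rho0 : R} :
  0 <= c -> (forall p, H p <= c * \sum_i Num.max (p ord0 i) 0) ->
  (forall p, - H (- p) <= c * \sum_i Num.max (p ord0 i) 0) ->
  viscosity_solution m H G V -> 0 < rho0 ->
  (forall y : 'rV[R]_m, x ord0 k - rho0 < y ord0 k < x ord0 k + c + rho0 -> G y = 0) ->
  forall t, 0 <= t <= 1 -> V x t = 0.
Proof.
move=> c_ge0 H_le H_opp_le [V_cont [V_term [V_sub V_super]]] rho0_gt0 G_eq0.
have V_interior s : 0 < s < 1 -> V x s = 0.
  move=> s_itv; apply/eqP; rewrite eq_le; apply/andP; split.
    apply: (subsolution_le0 c H V c_ge0 H_le V_cont V_sub x s k rho0 s_itv rho0_gt0).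
    by move=> y y_in; rewrite V_term G_eq0.
  have negV_cont : {within [set z : 'rV[R]_m * R | 0 <= z.2 <= 1],
      continuous (fun z => - V z.1 z.2)} by move=> z; exact: continuousN (V_cont z).
  rewrite -oppr_le0; apply: (subsolution_le0 c _ (fun y s => - V y s) c_ge0 H_opp_le
    negV_cont (supersolution_oppr_subsolution _ _ V_super) x s k rho0 s_itv rho0_gt0).
  by move=> y y_in; rewrite V_term G_eq0 ?oppr0.
move=> t /andP[t_ge0 t_le1]; have [t_gt0 | t_le0] := ltrP 0 t; last first.
  have -> : t = 0 by lra.
  exact: eq0_at_initial_time V x V_cont V_interior.
have [t_lt1 | t_ge1] := ltrP t 1; first by apply: V_interior; rewrite t_gt0.
have -> : t = 1 by lra.
by rewrite V_term G_eq0 //; apply/andP; split; lra.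
Qed.

End ViscosityFacts.

Lemma gprime_eq0_slab {R : realType} {m : nat} (c : R) (x : 'rV[R]_m) : 0 < c ->
  ~~ [forall i, - (3 * c / 2) <= x ord0 i <= 3 * c / 2] ->
  exists k, exists2 rho0, 0 < rho0 &
    forall y : 'rV[R]_m, x ord0 k - rho0 < y ord0 k < x ord0 k + c + rho0 -> gprime m c y = 0.
Proof.
move=> c_gt0; rewrite negb_forall => /existsP[k]; rewrite negb_and -!ltNge => x_out.
have yk_out (y : 'rV[R]_m) : y ord0 k < - (c / 2) \/ 3 * c / 2 < y ord0 k -> gprime m c y = 0.
  move=> y_out; apply: gprime_out; rewrite negb_forall; apply/existsP; exists k.
  by rewrite negb_and -!ltNge; case: y_out => ->; rewrite ?orbT.
exists k; case/orP: x_out => x_out.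
- exists (- (3 * c / 2) - x ord0 k); first lra.
  by move=> y /andP[? ?]; apply: yk_out; left; lra.
- exists (x ord0 k - 3 * c / 2); first lra.
  by move=> y /andP[? ?]; apply: yk_out; right; lra.
Qed.

Theorem mainTheorem8 (R : realType) (X : finType) (K m : nat)
  (hm : (2 <= m)%N) (hK : (0 < K)%N) (eps : R) (heps : 0 < eps < 1)
  (nu : 'I_m -> 'I_K -> X -> R)
  (hnu : forall i a, is_dist X (nu i a))
  (hnueps : forall i a x, eps <= nu i a x) :
  let c := ln (eps^-1) in
  let g' := gprime m c in
  ((exists M : R, forall x, `|g' x| <= M) /\
   (exists L : R, forall x y, `|g' x - g' y| <= L * `|x - y|) /\
   compact (closure [set x | g' x != 0]) /\
   (forall x, cubeC m c x -> g' x = gfun m x)) /\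
  (forall V : 'rV[R]_m -> R -> R,
     viscosity_solution m (Ham X K m nu) g' V ->
     forall (x : 'rV[R]_m) (t : R), 0 <= t <= 1 ->
       ~~ [forall i, (- (3 * c / 2) <= x ord0 i <= 3 * c / 2)] ->
       V x t = 0).
Proof.
move=> c g'; have [eps_gt0 eps_lt1] := andP heps.
have c_gt0 : 0 < c by rewrite ln_gt0 // invf_gt1.
split.
  split; first by exists c => x; exact: gprime_bound.
  split; first by exists 3 => x y; exact: gprime_lipschitz.
  by split=> [|x]; [exact: gprime_support_compact | exact: gprime_cube].
move=> V V_sol x t t_itv x_out.
have [k [rho0 rho0_gt0 g'_eq0]] := gprime_eq0_slab c x c_gt0 x_out.
apply: (viscosity_eq0_ahead_of_slab (ltW c_gt0) _ _ V_sol rho0_gt0 g'_eq0 t t_itv).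
  exact: Ham_le eps nu hK (ltnW hm) eps_gt0 hnu hnueps.
exact: oppr_Ham_opp_le eps nu hK (ltnW hm) eps_gt0 hnu hnueps.
Qed.
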